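(* Let $(L,\vee,\wedge,0,1)$ be a finite complemented lattice with $0\ne1$ such that the mapping $x\mapsto x^{++}$ from $L$ to $2^L$ is injective, and let $a\in L$ with $a^{++}\neq\{a\}$. Then there exists some $b\in a^{++}$ with $b^{++}=\{b\}$.
   Context: For $a\in L$, $a^+:=\{x\in L\mid a\vee x=1,\ a\wedge x=0\}$ (the set of all complements of $a$). For $A\subseteq L$, $A^+:=\{x\in L\mid a\vee x=1\text{ and }a\wedge x=0\text{ for all }a\in A\}$, and $a^{++}:=(a^+)^+$. *)

From HB Require Import structures.
From mathcomp Require Import all_boot all_order.
Set Implicit Arguments. Unset Strict Implicit. Unset Printing Implicit Defensive.
Import Order.TTheory.
Local Open Scope order_scope.

Definition compls {disp : Order.disp_t} {L : finTBLatticeType disp} (a : L) : {set L} :=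
  [set x : L | (a `|` x == \top) && (a `&` x == \bot)].

Definition complsS {disp : Order.disp_t} {L : finTBLatticeType disp} (A : {set L}) : {set L} :=
  [set x : L | [forall a in A, (a `|` x == \top) && (a `&` x == \bot)]].

Definition compls2 {disp : Order.disp_t} {L : finTBLatticeType disp} (a : L) : {set L} :=
  complsS (compls a).

Definition complemented {disp : Order.disp_t} (L : finTBLatticeType disp) : Prop :=
  forall a : L, exists x : L, (a `|` x = \top) /\ (a `&` x = \bot).

From mathcomp Require Import all_boot all_order.
Import Order.TTheory.
Local Open Scope order_scope.

(* Being a complement is symmetric, so [b \in a^{++}] just says [a^+ \subset b^+]:
   membership in double complement sets is a preorder, and [b^{++} \subset a^{++}]
   whenever [b \in a^{++}].  Injectivity of [x |-> x^{++}] makes this inclusion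
   strict for [b != a], so an element [b] of [a^{++}] with [#|b^{++}|] minimal
   satisfies [b^{++} = [set b]]. *)

Section DoubleComplements.

Context {disp : Order.disp_t} {L : finTBLatticeType disp}.
Implicit Types a b c x : L.

Lemma mem_compls a x : (x \in compls a) = (a `|` x == \top) && (a `&` x == \bot).
Proof. by rewrite inE. Qed.

Lemma compls_sym a x : (x \in compls a) = (a \in compls x).
Proof. by rewrite !mem_compls joinC meetC. Qed.

Lemma mem_compls2 a b : (b \in compls2 a) = (compls a \subset compls b).
Proof.
rewrite inE; apply/forall_inP/subsetP => [Hb x Hx | Hab x Hx].
  by rewrite compls_sym mem_compls Hb.
by rewrite -mem_compls -compls_sym Hab.
Qed.

Lemma compls2_refl a : a \in compls2 a.
Proof. by rewrite mem_compls2. Qed.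

Lemma compls2_trans {a b c : L} : b \in compls2 a -> c \in compls2 b -> c \in compls2 a.
Proof. by rewrite !mem_compls2; apply: subset_trans. Qed.

Lemma compls2_subset a b : b \in compls2 a -> compls2 b \subset compls2 a.
Proof. by move=> Hb; apply/subsetP => c; apply: compls2_trans. Qed.

Lemma compls2_proper (inj : injective (@compls2 disp L)) {a b : L} :
  b \in compls2 a -> b != a -> compls2 b \proper compls2 a.
Proof.
move=> Hb Hba; rewrite properEneq compls2_subset // andbT.
by apply: contra Hba => /eqP/inj->.
Qed.

End DoubleComplements.

Theorem proposition2 (disp : Order.disp_t) (L : finTBLatticeType disp) :
  complemented L ->
  (\bot : L) != \top ->
  injective (@compls2 disp L) ->
  forall a : L, compls2 a != [set a] ->
  exists2 b : L, b \in compls2 a & compls2 b = [set b].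
Proof.
move=> _ _ inj a _.
case: (arg_minnP (fun b => #|compls2 b|) (compls2_refl a)) => b Hb b_min.
exists b => //; apply/setP => c; rewrite inE.
apply/idP/eqP => [Hc | ->]; last exact: compls2_refl.
apply/eqP; apply: contraT => Hcb.
have := proper_card (compls2_proper inj Hc Hcb).
by rewrite ltnNge b_min //; apply: compls2_trans Hb Hc.
Qed.
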